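(* Fix $b\in\mathbb{N}$. For $(r,s)\in L=\mathbb{N}\times\mathbb{N}$ define \[ \Lambda(r,s)=|\{(n,m)\in L : (n,m)\text{ is } b\text{-visible and } |n-r|+|m-s|=1\}|. \] Then the mean value $M(\Lambda)$ exists and $M(\Lambda)=\dfrac{4}{\zeta(b+1)}$, where $\zeta$ is the Riemann zeta function.
   Context: For $r,s\in\mathbb{N}$, $\gcd_b(r,s)=\max\{k\in\mathbb{N} : k\mid r \text{ and } k^b\mid s\}$; $(r,s)$ is $b$-visible if $\gcd_b(r,s)=1$. The mean value of $\Lambda:L\to\mathbb{C}$ is $M(\Lambda)=\lim_{N\to\infty}\frac{1}{N^2}\sum_{0<r,s\le N}\Lambda(r,s)$. *)

From HB Require Import structures.
From mathcomp Require Import all_boot all_order all_algebra.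
From mathcomp Require Import all_classical all_reals topology normedtype sequences.
Set Implicit Arguments. Unset Strict Implicit. Unset Printing Implicit Defensive.
Import Order.TTheory GRing.Theory Num.Theory.
Import numFieldNormedType.Exports.
Local Open Scope ring_scope.

(* gcd_b(r,s) = max { k in N : k | r and k^b | s }  (for r >= 1 the
   candidates k satisfy 1 <= k <= r; k = 0 is never a divisor of r > 0). *)
Definition gcdb (b r s : nat) : nat :=
  (\max_(k < r.+1 | (k %| r) && (k ^ b %| s)) k)%N.

Definition bvisible (b r s : nat) : bool := gcdb b r s == 1%N.

(* Lambda(r,s): number of b-visible (n,m) in N x N (N = {1,2,...}) with
   |n - r| + |m - s| = 1.  Such points satisfy n <= r+1, m <= s+1. *)
Definition Lambda (b r s : nat) : nat :=
  #|[set p : 'I_(r.+2) * 'I_(s.+2) |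
      [&& (0 < p.1)%N, (0 < p.2)%N, bvisible b p.1 p.2
        & (`|(p.1 : nat) - r|%N + `|(p.2 : nat) - s|%N == 1)%N]]|.

Definition mean_seq {R : realType} (b : nat) (N : nat) : R :=
  (N%:R ^+ 2)^-1 * \sum_(1 <= r < N.+1) \sum_(1 <= s < N.+1) (Lambda b r s)%:R.

Definition zeta {R : realType} (s : nat) : R :=
  limn (series (fun n : nat => ((n.+1)%:R ^+ s)^-1 : R) : R^nat).

From HB Require Import structures.
From mathcomp Require Import all_boot all_order all_algebra.
From mathcomp Require Import all_classical all_reals topology normedtype sequences.
From mathcomp Require Import zify ring lra.
Set Implicit Arguments. Unset Strict Implicit. Unset Printing Implicit Defensive.
Import Order.TTheory GRing.Theory Num.Theory.
Import numFieldNormedType.Exports.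
Local Open Scope ring_scope.

(* Sorting the points of [1,x] x [1,y] by their gcd_b gives
     x y = \sum_(d >= 1) V(x / d, y / d^b),
   where V(x, y) = nvisible x y counts the b-visible points of the box, because
   gcd_b(n, m) = d exactly when d | n, d^b | m and (n/d, m/d^b) is b-visible.
   Write c = 1/zeta(b+1).  If |V(x,y) - c x y| <= t x y for all large x, y, then
   inserting this bound into the terms 2 <= d <= D of the identity contributes at
   most (zeta(b+1) - 1) t x y <= 3/4 t x y, while the rounding errors and the
   terms d > D are O(x y / D + D (x + y)); so the estimate improves to 7/8 t and
   V(N,N) / N^2 tends to c.  Finally Lambda(r,s) is the number of b-visible points
   among the four neighbours of (r,s), and each of the four shifted sums of
   visibility indicators over [1,N]^2 differs from V(N,N) by at most N. *)

Section Visibility.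
Local Open Scope nat_scope.

Lemma sum_multiples d x (f : nat -> nat) : 0 < d ->
  \sum_(1 <= n < x.+1) (if d %| n then f (n %/ d) else 0) =
  \sum_(1 <= k < (x %/ d).+1) f k.
Proof.
move=> d_gt0; elim: x => [|x IHx]; first by rewrite div0n !big_geq.
rewrite big_nat_recr //= IHx divnS //.
by case: (d %| x.+1); rewrite /= ?addn0 // add1n [in RHS]big_nat_recr.
Qed.

Lemma sum_box1 x y : \sum_(1 <= n < x.+1) \sum_(1 <= m < y.+1) 1 = x * y.
Proof.
rewrite (eq_bigr (fun=> y)) => [|n _]; last by rewrite sum_nat_const_nat muln1 subn1.
by rewrite sum_nat_const_nat subn1.
Qed.

Variable b : nat.

Definition bdivisor r s k := (k %| r) && (k ^ b %| s).

Lemma bdivisor1 r s : bdivisor r s 1.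
Proof. by rewrite /bdivisor dvd1n exp1n dvd1n. Qed.

Lemma leq_gcdb r s k : 0 < r -> bdivisor r s k -> k <= gcdb b r s.
Proof.
move=> r_gt0 /[dup] /andP[/dvdn_leq-/(_ r_gt0) k_le_r _] kdiv.
exact: (leq_bigmax_cond (Ordinal (k_le_r : k < r.+1))).
Qed.

Lemma bdivisor_gcdb r s : 0 < r -> bdivisor r s (gcdb b r s).
Proof.
move=> r_gt0; pose A := [pred k : 'I_r.+1 | bdivisor r s k].
have -> : gcdb b r s = \max_(k in A) k by apply: eq_bigl => k; rewrite inE.
have [|i + ->] := @eq_bigmax_cond _ A val; last by rewrite inE.
by apply/card_gt0P; exists (Ordinal (r_gt0 : 1 < r.+1)); rewrite inE bdivisor1.
Qed.

Lemma gcdb_gt0 r s : 0 < r -> 0 < gcdb b r s.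
Proof. by move=> r_gt0; apply: leq_gcdb r_gt0 (bdivisor1 r s). Qed.

Lemma gcdb_leq r s : 0 < r -> gcdb b r s <= r.
Proof. by move=> r_gt0; case/andP: (bdivisor_gcdb s r_gt0) => /dvdn_leq->. Qed.

Lemma bvisibleP r s : 0 < r ->
  reflect (forall k, bdivisor r s k -> k <= 1) (bvisible b r s).
Proof.
move=> r_gt0; apply: (iffP eqP) => [<- k|le1]; first exact: leq_gcdb.
by apply/eqP; rewrite eqn_leq gcdb_gt0 // le1 // bdivisor_gcdb.
Qed.

Lemma bdivisor_dvdn r s d k : 0 < r -> d %| r -> d ^ b %| s ->
  bvisible b (r %/ d) (s %/ d ^ b) -> bdivisor r s k -> k %| d.
Proof.
move=> r_gt0 dr ds vis /andP[kr ks].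
have k_gt0 : 0 < k by apply: dvdn_gt0 kr.
have d_gt0 : 0 < d by apply: dvdn_gt0 dr.
set g := gcdn k d; have g_gt0 : 0 < g by rewrite gcdn_gt0 k_gt0.
have ek : k = k %/ g * g by rewrite divnK // dvdn_gcdl.
have ed : d = d %/ g * g by rewrite divnK // dvdn_gcdr.
have cop : coprime (k %/ g) (d %/ g).
  by rewrite /coprime -(eqn_pmul2r g_gt0) mul1n muln_gcdl -ek -ed.
have er : r = r %/ d * (d %/ g) * g by rewrite -mulnA -ed divnK.
have es : s = s %/ d ^ b * (d %/ g) ^ b * g ^ b
  by rewrite -mulnA -expnMn -ed divnK.
have k'r : k %/ g %| r %/ d.
  by move: kr; rewrite {1}er {1}ek dvdn_pmul2r // Gauss_dvdl.
have k's : (k %/ g) ^ b %| s %/ d ^ b.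
  move: ks; rewrite {1}es {1}ek expnMn dvdn_pmul2r ?expn_gt0 ?g_gt0 //.
  by rewrite Gauss_dvdl // coprimeXr // coprimeXl.
have r'_gt0 : 0 < r %/ d by rewrite divn_gt0 // dvdn_leq.
have k'_le1 : k %/ g <= 1.
  by move/(bvisibleP _ r'_gt0): vis; apply; rewrite /bdivisor k'r k's.
have k'_gt0 : 0 < k %/ g by rewrite divn_gt0 // dvdn_leq // dvdn_gcdl.
by rewrite ek (_ : k %/ g = 1) ?mul1n ?dvdn_gcdr //; apply/eqP; rewrite eqn_leq k'_le1.
Qed.

Lemma gcdb_eq_div r s d : 0 < r -> 0 < d ->
  (gcdb b r s == d) = [&& d %| r, d ^ b %| s & bvisible b (r %/ d) (s %/ d ^ b)].
Proof.
move=> r_gt0 d_gt0; apply/idP/idP => [/eqP gcd_d | /and3P[dr ds vis]].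
  have /andP[dr ds] := bdivisor_gcdb s r_gt0; rewrite gcd_d in dr ds.
  rewrite dr ds; apply/bvisibleP => [|k /andP[kr ks]].
    by rewrite divn_gt0 // dvdn_leq.
  have : bdivisor r s (k * d).
    rewrite /bdivisor -(divnK dr) dvdn_pmul2r // kr expnMn.
    by rewrite -(divnK ds) dvdn_pmul2r ?expn_gt0 ?d_gt0.
  by move/(leq_gcdb r_gt0); rewrite gcd_d -{2}[d]mul1n leq_pmul2r.
rewrite eqn_leq (leq_gcdb r_gt0) ?andbT; last by rewrite /bdivisor dr ds.
by rewrite dvdn_leq // (bdivisor_dvdn r_gt0 dr ds vis (bdivisor_gcdb s r_gt0)).
Qed.

Definition nvisible x y :=
  \sum_(1 <= n < x.+1) \sum_(1 <= m < y.+1) (bvisible b n m : nat).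

Lemma nvisible_leq x y : nvisible x y <= x * y.
Proof.
by rewrite -sum_box1; apply: leq_sum => n _; apply: leq_sum => m _; apply: leq_b1.
Qed.

Lemma sum_gcdb_indicator n m U : 0 < n <= U ->
  \sum_(1 <= d < U.+1) (gcdb b n m == d : nat) = 1.
Proof.
case/andP=> n_gt0 nU; rewrite -big_mkcond /=.
rewrite (eq_bigl (fun d => d == gcdb b n m)) => [|d]; last by rewrite eq_sym.
by rewrite big_nat1_eq gcdb_gt0 //= ltnS (leq_trans (gcdb_leq _ n_gt0)).
Qed.

Lemma mul_eq_sum_nvisible x y U : x <= U ->
  x * y = \sum_(1 <= d < U.+1) nvisible (x %/ d) (y %/ d ^ b).
Proof.
move=> xU; rewrite -sum_box1.
transitivity (\sum_(1 <= d < U.+1) \sum_(1 <= n < x.+1) \sum_(1 <= m < y.+1)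
                (gcdb b n m == d : nat)).
  rewrite [RHS]exchange_big_nat; apply: eq_big_nat => n /andP[n_gt0 nx].
  rewrite [RHS]exchange_big_nat; apply: eq_big_nat => m _.
  by rewrite sum_gcdb_indicator // n_gt0 (leq_trans _ xU) // -ltnS.
apply: eq_big_nat => d /andP[d_gt0 _]; rewrite /nvisible -sum_multiples //.
apply: eq_big_nat => n /andP[n_gt0 _].
case dn: (d %| n); last by rewrite big1 // => m _; rewrite gcdb_eq_div // dn.
rewrite -sum_multiples ?expn_gt0 ?d_gt0 //; apply: eq_big_nat => m _.
by rewrite gcdb_eq_div // dn; case: (d ^ b %| m).
Qed.

End Visibility.

Section Neighbours.
Local Open Scope nat_scope.

Lemma card_ord_pairs m n (P : nat -> nat -> bool) :
  #|[set p : 'I_m * 'I_n | P p.1 p.2]| = \sum_(0 <= i < m) \sum_(0 <= j < n) P i j.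
Proof.
rewrite -sum1_card big_mkcond /=.
rewrite (eq_bigr (fun p : 'I_m * 'I_n => P p.1 p.2 : nat)) => [|p _]; last first.
  by rewrite inE; case: (P _ _).
rewrite -(pair_bigA _ (fun (i : 'I_m) (j : 'I_n) => P i j : nat)) /= big_mkord.
by apply: eq_bigr => i _; rewrite big_mkord.
Qed.

Lemma sum_mul_eq m a (F : nat -> nat) :
  \sum_(0 <= i < m) F i * (i == a) = F a * (a < m).
Proof.
rewrite (eq_bigr (fun i => if i == a then F i else 0)) => [|i _]; last first.
  by case: eqP; rewrite ?muln1 ?muln0.
by rewrite -big_mkcond big_nat1_eq; case: ltnP; rewrite ?muln1 ?muln0.
Qed.

Lemma sum2_mul_eq m n a c (F : nat -> nat -> nat) : a < m -> c < n ->
  \sum_(0 <= i < m) \sum_(0 <= j < n) F i j * ((i == a) && (j == c)) = F a c.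
Proof.
move=> am cn.
transitivity (\sum_(0 <= i < m) (\sum_(0 <= j < n) F i j * (j == c)) * (i == a)).
  apply: eq_bigr => i _; rewrite big_distrl /=; apply: eq_bigr => j _.
  by case: (i == a); case: (j == c); rewrite ?muln0 ?muln1.
by rewrite sum_mul_eq sum_mul_eq am cn !muln1.
Qed.

Lemma neighbour_indicator r s i j : 0 < r -> 0 < s ->
  (`|(i : nat) - r|%N + `|(j : nat) - s|%N == 1 : nat) =
  ((i == r.-1) && (j == s)) + ((i == r.+1) && (j == s))
  + ((i == r) && (j == s.-1)) + ((i == r) && (j == s.+1)).
Proof. by move=> r_gt0 s_gt0; case: eqP => h; repeat case: eqP => ? /=; lia. Qed.

Variable b : nat.

Definition pos_visible n m : nat := [&& 0 < n, 0 < m & bvisible b n m].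

Lemma LambdaE r s : 0 < r -> 0 < s ->
  Lambda b r s = pos_visible r.-1 s + pos_visible r.+1 s
                 + pos_visible r s.-1 + pos_visible r s.+1.
Proof.
move=> r_gt0 s_gt0; rewrite /Lambda (card_ord_pairs _ _ (fun i j => [&& 0 < i, 0 < j,
  bvisible b i j & `|(i : nat) - r|%N + `|(j : nat) - s|%N == 1])).
rewrite (eq_bigr (fun i => \sum_(0 <= j < s.+2)
      (pos_visible i j * ((i == r.-1) && (j == s))
     + pos_visible i j * ((i == r.+1) && (j == s))
     + pos_visible i j * ((i == r) && (j == s.-1))
     + pos_visible i j * ((i == r) && (j == s.+1))))) => [|i _]; last first.
  apply: eq_bigr => j _; rewrite -!mulnDr -neighbour_indicator // mulnb.
  by rewrite /pos_visible !andbA.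
under eq_bigr => i _ do rewrite !big_split /=.
have [r1 s1] : r.-1 < r.+2 /\ s.-1 < s.+2 by split; apply: leq_trans (leq_pred _) _.
by rewrite !big_split /= !sum2_mul_eq.
Qed.

End Neighbours.

Lemma mul_leq_divn_mul x y d e : (0 < d)%N -> (0 < e)%N ->
  (x * y <= d * e * (x %/ d * (y %/ e)) + x * e + d * y)%N.
Proof.
move=> d_gt0 e_gt0; have := divn_eq x d; have := divn_eq y e.
have := ltn_pmod x d_gt0; have := ltn_pmod y e_gt0.
nia.
Qed.

Section FloorProducts.
Variables (R : realFieldType) (x y d e : nat).
Hypotheses (d_gt0 : (0 < d)%N) (e_gt0 : (0 < e)%N).

Lemma floor_prod_le : (x %/ d * (y %/ e))%:R <= (x * y)%:R / (d * e)%:R :> R.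
Proof.
rewrite ler_pdivlMr ?ltr0n ?muln_gt0 ?d_gt0 // -natrM ler_nat mulnACA.
by rewrite leq_mul // leq_divM.
Qed.

Lemma floor_prod_err :
  (x * y)%:R / (d * e)%:R - (x %/ d * (y %/ e))%:R <= (x + y)%:R :> R.
Proof.
rewrite lerBlDr ler_pdivrMr ?ltr0n ?muln_gt0 ?d_gt0 // -natrD -natrM ler_nat.
by apply: leq_trans (mul_leq_divn_mul x y d_gt0 e_gt0) _; nia.
Qed.

End FloorProducts.
Section ZetaBounds.
Variables (R : realType) (s : nat).
Hypothesis s_gt1 : (1 < s)%N.

Definition zeta_partial (D : nat) : R := \sum_(1 <= d < D.+1) (d%:R ^+ s)^-1.

Lemma invXS_le_telescope (k : nat) : (0 < k)%N ->
  ((k.+1)%:R ^+ s)^-1 <= k%:R^-1 - (k.+1)%:R^-1 :> R.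
Proof.
move=> k_gt0.
have -> : k%:R^-1 - (k.+1)%:R^-1 = ((k * k.+1)%:R)^-1 :> R.
  have k_neq0 : k%:R != 0 :> R by rewrite pnatr_eq0 -lt0n.
  have k1_neq0 : k%:R + 1 != 0 :> R by rewrite natr1 pnatr_eq0.
  by rewrite natrM -natr1; field; rewrite k_neq0 k1_neq0.
rewrite -natrX lef_pV2 ?posrE ?ltr0n ?muln_gt0 ?expn_gt0 ?k_gt0 // ler_nat.
rewrite -(subnKC s_gt1) expnSr mulnC leq_mul //.
by rewrite expnS leq_pmulr // expn_gt0.
Qed.

Lemma zeta_partial_tail D n : (0 < D)%N -> (D <= n)%N ->
  \sum_(D.+1 <= d < n.+1) (d%:R ^+ s)^-1 <= D%:R^-1 - n%:R^-1 :> R.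
Proof.
move=> D_gt0; elim: n => [|n IHn]; first by rewrite leqn0 => /eqP D0; rewrite D0 in D_gt0.
rewrite leq_eqVlt ltnS => /predU1P[<-|Dn]; first by rewrite big_geq // subrr.
rewrite big_nat_recr ?ltnS //=.
apply: le_trans (lerD (IHn Dn) (invXS_le_telescope (leq_trans D_gt0 Dn))) _.
by rewrite addrA subrK.
Qed.

Lemma zeta_partial_nondecreasing : {homo zeta_partial : m n / (m <= n)%N >-> m <= n}.
Proof.
move=> m n mn; apply: (@nondecreasing_series R _ predT 1%N); last by rewrite ltnS.
by move=> k _ _; rewrite invr_ge0 exprn_ge0.
Qed.

Lemma zeta_partial_le D n : (0 < D)%N -> zeta_partial n <= zeta_partial D + D%:R^-1.
Proof.
move=> D_gt0; have [nD|Dn] := leqP n D.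
  by apply: le_trans (zeta_partial_nondecreasing nD) _; rewrite lerDl invr_ge0.
rewrite /zeta_partial (@big_cat_nat _ _ _ D.+1) //= 1?ltnW // lerD2l.
apply: le_trans (zeta_partial_tail D_gt0 (ltnW Dn)) _.
by rewrite lerBlDr lerDl invr_ge0.
Qed.

Lemma zeta_partialE : series (fun n => ((n.+1)%:R ^+ s)^-1) = zeta_partial.
Proof. by apply/funext => n; rewrite /series /= /zeta_partial big_add1. Qed.

Lemma cvgn_zeta_partial : cvgn zeta_partial.
Proof.
apply: nondecreasing_is_cvgn; first exact: zeta_partial_nondecreasing.
exists (zeta_partial 1 + 1) => _ [n _ <-].
by have := zeta_partial_le n (isT : (0 < 1)%N); rewrite invr1.
Qed.

Lemma zeta_partial_le_zeta D : zeta_partial D <= zeta s.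
Proof.
rewrite /zeta zeta_partialE; apply: nondecreasing_cvgn_le; last exact: cvgn_zeta_partial.
exact: zeta_partial_nondecreasing.
Qed.

Lemma zeta_le_partial D : (0 < D)%N -> zeta s <= zeta_partial D + D%:R^-1.
Proof.
move=> D_gt0; rewrite /zeta zeta_partialE.
by apply: limr_le; [exact: cvgn_zeta_partial | apply: nearW => n; apply: zeta_partial_le].
Qed.

Lemma zeta_ge1 : 1 <= zeta s :> R.
Proof.
by apply: le_trans (zeta_partial_le_zeta 1); rewrite /zeta_partial big_nat1 expr1n invr1.
Qed.

Lemma zeta_le_7_4 : zeta s <= 7 / 4 :> R.
Proof.
apply: le_trans (zeta_le_partial (isT : (0 < 2)%N)) _.
rewrite /zeta_partial big_ltn // big_nat1 expr1n invr1.
have : (2%:R ^+ s)^-1 <= 1/4 :> R.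
  rewrite div1r lef_pV2 ?posrE ?exprn_gt0 // -natrX ler_nat.
  by rewrite -(subnKC s_gt1) expnD leq_pmulr // expn_gt0.
lra.
Qed.

End ZetaBounds.

Local Open Scope classical_set_scope.
Local Open Scope ring_scope.

Section Density.
Variables (R : realType) (b : nat).
Hypothesis b_gt0 : (0 < b)%N.
Local Notation s := b.+1.
Let s_gt1 : (1 < s)%N := b_gt0.

Definition visible_density : R := (zeta s)^-1.
Local Notation c := visible_density.

Lemma zeta_gt0 : 0 < zeta s :> R.
Proof. exact: lt_le_trans ltr01 (zeta_ge1 R s_gt1). Qed.

Lemma visible_density_gt0 : 0 < c.
Proof. by rewrite invr_gt0 zeta_gt0. Qed.

Lemma visible_density_le1 : c <= 1.
Proof. by rewrite invf_le1 ?zeta_gt0 ?zeta_ge1. Qed.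

Lemma visible_densityK : c * zeta s = 1.
Proof. by rewrite mulVf // gt_eqF // zeta_gt0. Qed.

Definition density_bound (t : R) (K : nat) :=
  forall x y : nat, (K <= x)%N -> (K <= y)%N ->
  `|(nvisible b x y)%:R - c * (x * y)%:R| <= t * (x * y)%:R.

Lemma density_bound_le t t' K : t <= t' -> density_bound t K -> density_bound t' K.
Proof.
by move=> tt' bound x y Kx Ky; apply: le_trans (bound x y Kx Ky) (ler_wpM2r _ tt').
Qed.

Lemma density_bound1 : density_bound 1 0.
Proof.
move=> x y _ _; have := nvisible_leq b x y; rewrite -(ler_nat R) => V_le.
have V_ge0 : 0 <= (nvisible b x y)%:R :> R by [].
have cxy_le : c * (x * y)%:R <= (x * y)%:R by apply: ler_piMl; rewrite ?visible_density_le1.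
have cxy_ge0 : 0 <= c * (x * y)%:R by rewrite mulr_ge0 // ltW // visible_density_gt0.
rewrite mul1r ler_norml; apply/andP; split; lra.
Qed.

Section Step.
Variables (t : R) (K D x y : nat).
Hypotheses (t_ge0 : 0 <= t) (bound : density_bound t K) (D_gt1 : (1 < D)%N)
  (Kx : (K * D ^ b <= x)%N) (Ky : (K * D ^ b <= y)%N).

Let D_gt0 : (0 < D)%N := ltnW D_gt1.
Let a d : R := (nvisible b (x %/ d) (y %/ d ^ b))%:R.
Let p d : R := (x %/ d * (y %/ d ^ b))%:R.
Let U := maxn x D.
Local Notation xy := ((x * y)%:R : R).

Lemma floor_prod_le_term d : (0 < d)%N -> p d <= xy * (d%:R ^+ s)^-1.
Proof. by move=> d_gt0; rewrite -natrX expnS floor_prod_le ?expn_gt0 ?d_gt0. Qed.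

Lemma nvisible_split :
  (nvisible b x y)%:R = xy - \sum_(2 <= d < D.+1) a d - \sum_(D.+1 <= d < U.+1) a d.
Proof.
rewrite (mul_eq_sum_nvisible b y (leq_maxl x D)) natr_sum.
rewrite big_ltn ?ltnS ?(leq_trans D_gt0) ?leq_maxr //.
rewrite (@big_cat_nat _ _ _ D.+1) ?ltnS ?leq_maxr //= divn1 exp1n divn1.
by rewrite /a /U; ring.
Qed.

Lemma large_divisors_bound : 0 <= \sum_(D.+1 <= d < U.+1) a d <= xy / D%:R.
Proof.
rewrite sumr_ge0 //=.
apply: le_trans (_ : \sum_(D.+1 <= d < U.+1) xy * (d%:R ^+ s)^-1 <= _).
  apply: ler_sum_nat => d /andP[Dd _].
  apply: le_trans _ (floor_prod_le_term (ltn_trans D_gt0 Dd)).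
  by rewrite ler_nat nvisible_leq.
rewrite -mulr_sumr; apply: ler_wpM2l => //.
apply: le_trans (zeta_partial_tail R s_gt1 D_gt0 (leq_maxr x D)) _.
by rewrite gerDl oppr_le0 invr_ge0.
Qed.

Lemma small_divisors_floor :
  0 <= xy * (zeta_partial R s D - 1) - \sum_(2 <= d < D.+1) p d <= D%:R * (x + y)%:R.
Proof.
rewrite /zeta_partial big_ltn // expr1n invr1 [1 + _]addrC addrK mulr_sumr -sumrB.
apply/andP; split.
  rewrite big_nat_cond; apply: sumr_ge0 => d /andP[/andP[d_gt1 _] _].
  by rewrite subr_ge0 floor_prod_le_term // ltnW.
apply: le_trans (_ : \sum_(2 <= d < D.+1) (x + y)%:R <= _).
  apply: ler_sum_nat => d /andP[d_gt1 _]; rewrite -natrX expnS.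
  by rewrite /p floor_prod_err ?expn_gt0 ?(ltnW d_gt1).
rewrite sumr_const_nat -(mulr_natr (x + y)%:R) mulrC; apply: ler_wpM2r => //.
by rewrite ler_nat subSS leq_subr.
Qed.

Lemma small_divisors_density :
  `|\sum_(2 <= d < D.+1) a d - c * \sum_(2 <= d < D.+1) p d|
    <= t * \sum_(2 <= d < D.+1) p d.
Proof.
rewrite mulr_sumr -sumrB mulr_sumr; apply: le_trans (ler_norm_sum _ _ _) _.
apply: ler_sum_nat => d /andP[d_gt1 dD]; rewrite ltnS in dD.
have d_gt0 : (0 < d)%N := ltnW d_gt1.
have le_Db : (K * d ^ b <= K * D ^ b)%N by rewrite leq_mul2l leq_exp2r ?dD ?orbT.
have le_D : (K * d <= K * D ^ b)%N.
  by rewrite leq_mul2l (leq_trans dD) ?orbT // -{1}[D]expn1 leq_pexp2l.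
rewrite /a /p; apply: bound.
  by rewrite leq_divRL // (leq_trans le_D).
by rewrite leq_divRL ?expn_gt0 ?d_gt0 // (leq_trans le_Db).
Qed.

Lemma density_bound_step :
  `|(nvisible b x y)%:R - c * xy| <= 3/4 * t * xy + 2 * xy / D%:R + D%:R * (x + y)%:R.
Proof.
have [Q_ge0 Q_le] := andP small_divisors_floor.
have [T_ge0 T_le] := andP large_divisors_bound.
have := small_divisors_density; rewrite ler_norml => /andP[E_ge E_le].
set Z := zeta_partial R s D in Q_ge0 Q_le *.
set S2a := \sum_(2 <= d < D.+1) a d in E_ge E_le *.
set S2p := \sum_(2 <= d < D.+1) p d in Q_ge0 Q_le E_ge E_le *.
set T := \sum_(D.+1 <= d < U.+1) a d in T_ge0 T_le *.
have xy_ge0 : 0 <= xy by [].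
have [c_gt0 c_le1] := (visible_density_gt0, visible_density_le1).
have tail_le : xy * (c * (zeta s - Z)) <= xy / D%:R.
  apply: ler_wpM2l => //; apply: le_trans (ler_piMl _ c_le1) _.
    by rewrite subr_ge0 zeta_partial_le_zeta.
  by rewrite lerBlDl zeta_le_partial.
have tail_ge0 : 0 <= xy * (c * (zeta s - Z)).
  by rewrite !mulr_ge0 ?subr_ge0 ?zeta_partial_le_zeta // ltW.
have S2p_le : S2p <= 3/4 * xy.
  apply: le_trans (_ : xy * (Z - 1) <= _); first by rewrite -subr_ge0.
  rewrite mulrC; apply: ler_wpM2r => //; rewrite lerBlDr.
  apply: le_trans (zeta_partial_le_zeta R s_gt1 D) _.
  by apply: le_trans (zeta_le_7_4 R s_gt1) _; lra.
have cQ_le : c * (xy * (Z - 1) - S2p) <= xy * (Z - 1) - S2p by apply: ler_piMl.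
have cQ_ge0 : 0 <= c * (xy * (Z - 1) - S2p) by rewrite mulr_ge0 // ltW.
have tS2p_le : t * S2p <= t * (3/4 * xy) by apply: ler_wpM2l.
have tS2p_ge0 : 0 <= t * S2p by rewrite mulr_ge0 // sumr_ge0.
(* Write c xy = c xy zeta(s) and split zeta(s) = 1 + (Z - 1) + (zeta(s) - Z),
   matching the terms d = 1, 2 <= d <= D and d > D of nvisible_split. *)
have ->: (nvisible b x y)%:R - c * xy =
    xy * (c * (zeta s - Z)) + c * (xy * (Z - 1) - S2p) - (S2a - c * S2p) - T.
  have xyE : xy = xy * (c * zeta s) by rewrite visible_densityK mulr1.
  by rewrite nvisible_split -/S2a -/T {1}xyE; ring.
rewrite ler_norml; apply/andP; split; lra.
Qed.

End Step.

Lemma density_bound_improve t K : 0 < t -> density_bound t K ->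
  exists K', density_bound (7/8 * t) K'.
Proof.
move=> t_gt0 bound; pose D := (Num.truncn (32 / t)).+2.
have D_gt0 : 0 < D%:R :> R by rewrite ltr0n.
have tD : 32 <= D%:R * t.
  by rewrite -ler_pdivrMr // ltW // (lt_le_trans (truncnS_gt _)) // ler_nat.
pose M := (Num.truncn (32 * D%:R / t)).+1.
have tM : 32 * D%:R < M%:R * t by rewrite -ltr_pdivrMr // truncnS_gt.
(* D > 32/t and x, y >= M > 32 D/t make the last two terms of density_bound_step
   at most t/16 xy each. *)
exists (maxn (K * D ^ b)%N M) => x y; rewrite !geq_max => /andP[Kx Mx] /andP[Ky My].
apply: le_trans (density_bound_step (ltW t_gt0) bound _ Kx Ky) _ => //.
have tx : 32 * D%:R <= t * x%:R.
  apply/ltW/(lt_le_trans tM); rewrite mulrC.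
  by apply: ler_wpM2l; [exact: ltW | rewrite ler_nat].
have ty : 32 * D%:R <= t * y%:R.
  apply/ltW/(lt_le_trans tM); rewrite mulrC.
  by apply: ler_wpM2l; [exact: ltW | rewrite ler_nat].
have hxy : 2 * (x * y)%:R / D%:R <= t / 16 * (x * y)%:R.
  rewrite ler_pdivrMr //; move: (ler_wpM2r (ler0n R (x * y)) tD); lra.
have hx := ler_wpM2r (ler0n R y) tx; have hy := ler_wpM2r (ler0n R x) ty.
rewrite natrD mulrDr natrM; move: hxy; rewrite natrM; lra.
Qed.

Lemma density_bound_geometric k : exists K, density_bound ((7/8) ^+ k) K.
Proof.
elim: k => [|k [K bound]]; first by exists 0%N; exact: density_bound1.
have [|K' bound'] := density_bound_improve _ bound; first by rewrite exprn_gt0 //; lra.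
by exists K'; rewrite exprS.
Qed.

Lemma density_bound_all e : 0 < e -> exists K, density_bound e K.
Proof.
move=> e_gt0; have lt1 : `|7/8 : R| < 1 by rewrite ger0_norm; lra.
have /cvgrPdist_le/(_ e e_gt0) [k _ ke] := cvg_expr lt1.
have [K bound] := density_bound_geometric k; exists K.
apply: density_bound_le bound; have := ke k (leqnn k).
by rewrite /= sub0r normrN ger0_norm // exprn_ge0 //; lra.
Qed.

Lemma cvg_nvisible_diag :
  (fun N : nat => (nvisible b N N)%:R / (N * N)%:R) @ \oo --> c.
Proof.
apply/cvgrPdist_le => e e_gt0; have [K bound] := density_bound_all e_gt0.
apply: filterS (nbhs_infty_ge (maxn K 1)) => N; rewrite /= geq_max => /andP[KN N_gt0].
have NN_gt0 : 0 < (N * N)%:R :> R by rewrite ltr0n muln_gt0 N_gt0.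
have -> : c - (nvisible b N N)%:R / (N * N)%:R =
    (c * (N * N)%:R - (nvisible b N N)%:R) / (N * N)%:R.
  by field; rewrite pnatr_eq0 -lt0n.
by rewrite normrM normfV (gtr0_norm NN_gt0) ler_pdivrMr // distrC bound.
Qed.

End Density.

Section ShiftedSums.
Variable R : realFieldType.

Lemma sum_shift_dist (f : nat -> R) N : (forall k, 0 <= f k <= 1) ->
  `|\sum_(1 <= k < N.+1) f k.+1 - \sum_(1 <= k < N.+1) f k| <= 1.
Proof.
move=> f01; rewrite -sumrB telescope_sumr // ler_norml.
by move: (f01 1%N) (f01 N.+1) => /andP[? ?] /andP[? ?]; apply/andP; split; lra.
Qed.

Lemma sum_dist_le (A B : nat -> R) N : (forall k, `|A k - B k| <= 1) ->
  `|\sum_(1 <= k < N.+1) A k - \sum_(1 <= k < N.+1) B k| <= N%:R.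
Proof.
move=> AB; rewrite -sumrB; apply: le_trans (ler_norm_sum _ _ _) _.
by apply: le_trans (ler_sum _ (fun k _ => AB k)) _; rewrite sumr_const_nat subn1.
Qed.

Variables (F : nat -> nat -> R) (N : nat).
Hypothesis F01 : forall n m, 0 <= F n m <= 1.

Lemma sum2_shiftl_dist :
  `|\sum_(1 <= r < N.+1) \sum_(1 <= s < N.+1) F r.+1 s
    - \sum_(1 <= r < N.+1) \sum_(1 <= s < N.+1) F r s| <= N%:R.
Proof.
rewrite exchange_big_nat [X in _ - X]exchange_big_nat.
by apply: sum_dist_le => s; apply: sum_shift_dist => k.
Qed.

Lemma sum2_shiftr_dist :
  `|\sum_(1 <= r < N.+1) \sum_(1 <= s < N.+1) F r s.+1
    - \sum_(1 <= r < N.+1) \sum_(1 <= s < N.+1) F r s| <= N%:R.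
Proof. by apply: sum_dist_le => r; apply: sum_shift_dist. Qed.

End ShiftedSums.

Lemma sum_Lambda_dist (R : realType) b N :
  `|\sum_(1 <= r < N.+1) \sum_(1 <= s < N.+1) (Lambda b r s)%:R - 4 * (nvisible b N N)%:R|
    <= 4 * N%:R :> R.
Proof.
pose f n m : R := (pos_visible b n m)%:R.
have f01 n m : 0 <= f n m <= 1 by rewrite ler0n lern1 leq_b1.
have V_eq : (nvisible b N N)%:R = \sum_(1 <= r < N.+1) \sum_(1 <= s < N.+1) f r s.
  rewrite natr_sum; apply: eq_big_nat => r /andP[r_gt0 _].
  by rewrite natr_sum; apply: eq_big_nat => s /andP[s_gt0 _]; rewrite /f /pos_visible r_gt0 s_gt0.
have -> : \sum_(1 <= r < N.+1) \sum_(1 <= s < N.+1) (Lambda b r s)%:R =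
    \sum_(1 <= r < N.+1) \sum_(1 <= s < N.+1) f r.-1 s
  + \sum_(1 <= r < N.+1) \sum_(1 <= s < N.+1) f r.+1 s
  + \sum_(1 <= r < N.+1) \sum_(1 <= s < N.+1) f r s.-1
  + \sum_(1 <= r < N.+1) \sum_(1 <= s < N.+1) f r s.+1 :> R.
  rewrite -!big_split /=; apply: eq_big_nat => r /andP[r_gt0 _].
  rewrite -!big_split /=; apply: eq_big_nat => s /andP[s_gt0 _].
  by rewrite LambdaE // !natrD.
have h1 := @sum2_shiftl_dist _ f N f01.
have h2 := @sum2_shiftr_dist _ f N f01.
have h3 := @sum2_shiftl_dist _ (fun r s => f r.-1 s) N (fun _ _ => f01 _ _).
have h4 := @sum2_shiftr_dist _ (fun r s => f r s.-1) N (fun _ _ => f01 _ _).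
rewrite /= distrC in h3; rewrite /= distrC in h4.
rewrite V_eq; move: h1 h2 h3 h4; rewrite !ler_norml.
move=> /andP[? ?] /andP[? ?] /andP[? ?] /andP[? ?]; apply/andP; split; lra.
Qed.

Lemma cvg_Lambda_error (R : realType) b :
  (fun N : nat => (\sum_(1 <= r < N.+1) \sum_(1 <= s < N.+1) (Lambda b r s)%:R
                   - 4 * (nvisible b N N)%:R) / (N * N)%:R : R) @ \oo --> 0.
Proof.
apply/cvgr0Pnorm_le => e e_gt0.
apply: filterS (filterI (nbhs_infty_ger (4 / e)) (nbhs_infty_ge 1)) => N [eN N_gt0].
have NN_gt0 : 0 < (N * N)%:R :> R by rewrite ltr0n muln_gt0 N_gt0.
rewrite normrM normfV (gtr0_norm NN_gt0) ler_pdivrMr //.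
apply: le_trans (sum_Lambda_dist R b N) _.
by rewrite natrM mulrA; apply: ler_wpM2r => //; rewrite mulrC -ler_pdivrMr.
Qed.

Theorem mainTheorem7 (R : realType) (b : nat) (hb : (1 <= b)%N) :
  (@mean_seq R b) @ \oo --> 4 / zeta (b.+1).
Proof.
have -> : @mean_seq R b = fun N => 4 * ((nvisible b N N)%:R / (N * N)%:R)
    + (\sum_(1 <= r < N.+1) \sum_(1 <= s < N.+1) (Lambda b r s)%:R
       - 4 * (nvisible b N N)%:R) / (N * N)%:R.
  by apply/funext => N; rewrite /mean_seq natrM -expr2; ring.
rewrite -[4 / _]addr0; apply: cvgD; last exact: cvg_Lambda_error.
by apply: cvgMr; exact: cvg_nvisible_diag.
Qed.
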